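(* Let $1\le m<n$. (a) If $m=1$, then for every $A\in\mathbb R^{1\times n}$ and all $0<p,q\le\infty$: $\mathrm{pginv}_{\mathrm{row}(p,q)}(A)=\mathrm{ginv}_q(A)$; consequently there is a full-rank $A_1\in\mathbb R^{1\times n}$ with $A_1^\dagger\in\mathrm{pginv}_{\mathrm{row}(p,q)}(A_1)\iff q=2$ for $0<p\le\infty$, $0<q<\infty$. (b) If $m\ge2$, there exists a full-rank $A_4\in\mathbb R^{m\times n}$ such that for all $1\le p<\infty$ and $0<q<\infty$: $A_4^\dagger\in\mathrm{pginv}_{\mathrm{row}(p,q)}(A_4)\iff q=2$. (c) If $m\ge3$, there exists a full-rank $A_5\in\mathbb R^{m\times n}$ such that for all $1\le p<\infty$ and $q=2$: $A_5^\dagger\in\mathrm{pginv}_{\mathrm{row}(p,2)}(A_5)\iff p=2$. (d) If $m\ge3$, $1\le p<\infty$ and $0<q<\infty$, then: $A^\dagger\in\mathrm{pginv}_{\mathrm{row}(p,q)}(A)$ for every full-rank $A\in\mathbb R^{m\times n}$ if and only if $(p,q)=(2,2)$.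
   Context: Generalized inverses are taken real: $\mathcal G(A)=\{X\in\mathbb R^{n\times m}:AX=I_m\}$, $\mathrm{ginv}_\nu(A)=\arg\min_{X\in\mathcal G(A)}\|X\|_\nu$, $\mathrm{pginv}_\mu(A)=\arg\min_{X\in\mathcal G(A)}\|XA\|_\mu$ (sets). For $M$ with rows $m^i$, $\|M\|_{\mathrm{row}(p,q)}=(\sum_i\|m^i\|_p^q)^{1/q}$ (maximum for $q=\infty$); entrywise $\|M\|_q=\|\mathrm{vec}(M)\|_q$. $A^\dagger=A^\top(AA^\top)^{-1}$. *)

From Stdlib Require Import Reals Lra Lia Arith ClassicalEpsilon.
Open Scope R_scope.

(* Matrices are functions nat -> nat -> R; only entries with indices in
   range (given by explicit dimensions) are ever inspected. *)
Definition mat := nat -> nat -> R.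

Fixpoint sumR (k : nat) (f : nat -> R) : R :=
  match k with O => 0 | S k' => sumR k' f + f k' end.

(* max_{i<k} f i (0 for k = 0; used only on nonnegative values) *)
Fixpoint maxR (k : nat) (f : nat -> R) : R :=
  match k with O => 0 | S k' => Rmax (maxR k' f) (f k') end.

Definition rpow (x y : R) : R := if Rlt_dec 0 x then Rpower x y else 0.

(* exponents in (0, infinity] *)
Inductive ext : Type := Fin (p : R) | Inf.
Definition ext_pos (p : ext) : Prop :=
  match p with Fin p => 0 < p | Inf => True end.

Definition vnorm (k : nat) (v : nat -> R) (p : ext) : R :=
  match p with
  | Fin p => rpow (sumR k (fun i => rpow (Rabs (v i)) p)) (/ p)
  | Inf => maxR k (fun i => Rabs (v i))
  end.

Definition rownorm (r c : nat) (M : mat) (p q : ext) : R :=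
  vnorm r (fun i => vnorm c (M i) p) q.

Definition entnorm (r c : nat) (M : mat) (q : ext) : R :=
  vnorm (r * c) (fun k => M (Nat.div k c) (Nat.modulo k c)) q.

Definition mmul (k : nat) (A B : mat) : mat :=
  fun i j => sumR k (fun l => A i l * B l j).

Definition tr (A : mat) : mat := fun i j => A j i.

Definition idm : mat := fun i j => if Nat.eqb i j then 1 else 0.

Definition in_G (m n : nat) (A X : mat) : Prop :=
  forall i j, (i < m)%nat -> (j < m)%nat -> mmul n A X i j = idm i j.

Definition in_ginv (m n : nat) (A : mat) (nu : mat -> R) (X : mat) : Prop :=
  in_G m n A X /\ forall Y, in_G m n A Y -> nu X <= nu Y.

Definition in_pginv (m n : nat) (A : mat) (mu : mat -> R) (X : mat) : Prop :=
  in_G m n A X /\ forall Y, in_G m n A Y -> mu (mmul m X A) <= mu (mmul m Y A).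

Definition full_rank (m n : nat) (A : mat) : Prop :=
  forall c : nat -> R,
    (forall j, (j < n)%nat -> sumR m (fun i => c i * A i j) = 0) ->
    forall i, (i < m)%nat -> c i = 0.

(* inverse of a k x k matrix (a right inverse; meaningful when invertible) *)
Definition minv (k : nat) (M : mat) : mat :=
  epsilon (inhabits (fun _ _ => 0))
    (fun W => forall i j, (i < k)%nat -> (j < k)%nat -> mmul k M W i j = idm i j).

Definition dagger (m n : nat) (A : mat) : mat :=
  mmul m (tr A) (minv m (mmul n A (tr A))).

Definition rowN (n : nat) (p q : ext) : mat -> R := fun M => rownorm n n M p q.
Definition entN (n m : nat) (q : ext) : mat -> R := fun X => entnorm n m X q.

(* For m = 1 the rows of X A are the multiples x_i a of the single row a of A, so the
   row(p,q) norm of X A is |a|_p |x|_q.  For p = q = 2 the objective is the Frobenius norm,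
   and X A = A^+ A + (X - A^+) A is an orthogonal decomposition because A (X - A^+) = 0.
   The matrices A4 and A5 carry a line t |-> X(t) of generalized inverses through
   X(0) = A^+ along which the objective is an increasing function of an explicit smooth g
   with g'(0) <> 0 unless q = 2 (for A4), resp. p = 2 (for A5); so A^+ is not even a local
   minimizer.  Part (d) combines the two examples with the Frobenius case. *)

From Pilot Require Import Defs.
From Stdlib Require Import Reals Lra Lia Arith ClassicalEpsilon.
From mathcomp Require all_boot all_algebra Rstruct.
Open Scope R_scope.
Set Bullet Behavior "Strict Subproofs".

(** * Finite sums and maxima *)

Lemma sumR_ext k f g : (forall i, (i < k)%nat -> f i = g i) -> sumR k f = sumR k g.
Proof.
  induction k; simpl; intros H; auto.
  rewrite IHk by (intros; apply H; lia). rewrite H by lia. auto.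
Qed.

Lemma sumR_plus k f g : sumR k (fun i => f i + g i) = sumR k f + sumR k g.
Proof. induction k; simpl; [lra|]. rewrite IHk; lra. Qed.

Lemma sumR_minus k f g : sumR k (fun i => f i - g i) = sumR k f - sumR k g.
Proof. induction k; simpl; [lra|]. rewrite IHk; lra. Qed.

Lemma sumR_scal k c f : sumR k (fun i => c * f i) = c * sumR k f.
Proof. induction k; simpl; [lra|]. rewrite IHk; lra. Qed.

Lemma sumR_scal_r k c f : sumR k (fun i => f i * c) = sumR k f * c.
Proof. induction k; simpl; [lra|]. rewrite IHk; lra. Qed.

Lemma sumR_zero k f : (forall i, (i < k)%nat -> f i = 0) -> sumR k f = 0.
Proof.
  induction k; simpl; intros H; [lra|].
  rewrite IHk, H by (intros; try apply H; lia). lra.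
Qed.

Lemma sumR_le k f g : (forall i, (i < k)%nat -> f i <= g i) -> sumR k f <= sumR k g.
Proof.
  induction k; simpl; intros H; [lra|].
  pose proof (H k ltac:(lia)). pose proof (IHk ltac:(intros; apply H; lia)). lra.
Qed.

Lemma sumR_nonneg k f : (forall i, (i < k)%nat -> 0 <= f i) -> 0 <= sumR k f.
Proof.
  intros H. rewrite <- (sumR_zero k (fun _ => 0)) by auto. apply sumR_le; auto.
Qed.

Lemma sumR_swap a b f :
  sumR a (fun i => sumR b (fun j => f i j)) = sumR b (fun j => sumR a (fun i => f i j)).
Proof.
  induction a; simpl.
  - symmetry; apply sumR_zero; auto.
  - rewrite IHa, <- sumR_plus. auto.
Qed.

Lemma sumR_split k a f : (a <= k)%nat ->
  sumR k f = sumR a f + sumR (k - a) (fun i => f (a + i)%nat).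
Proof.
  intros H. induction k.
  - replace a with 0%nat by lia. simpl. lra.
  - destruct (Nat.eq_dec a (S k)) as [->|Ha].
    + rewrite Nat.sub_diag. simpl. lra.
    + replace (S k - a)%nat with (S (k - a)) by lia. cbn [sumR].
      rewrite IHk by lia. replace (a + (k - a))%nat with k by lia. lra.
Qed.

Lemma sumR_single k i0 f : (i0 < k)%nat ->
  (forall i, (i < k)%nat -> i <> i0 -> f i = 0) -> sumR k f = f i0.
Proof.
  intros Hi H. induction k; [lia|]. simpl. destruct (Nat.eq_dec i0 k) as [->|Hne].
  - rewrite sumR_zero by (intros; apply H; lia). lra.
  - rewrite IHk, (H k) by (try lia; intros; apply H; lia). lra.
Qed.

Lemma sumR_trunc k b f : (b <= k)%nat ->
  (forall i, (b <= i)%nat -> (i < k)%nat -> f i = 0) -> sumR k f = sumR b f.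
Proof.
  intros Hb H. rewrite (sumR_split k b f Hb), (sumR_zero (k - b)) by (intros; apply H; lia).
  lra.
Qed.

Lemma sumR_first_two k f : (2 <= k)%nat ->
  sumR k f = f 0%nat + f 1%nat + sumR (k - 2) (fun i => f (2 + i)%nat).
Proof. intros Hk. rewrite (sumR_split k 2) by auto. simpl. ring. Qed.

Lemma sumR_term_le k f i0 : (forall i, (i < k)%nat -> 0 <= f i) -> (i0 < k)%nat ->
  f i0 <= sumR k f.
Proof.
  intros H Hi. apply Rle_trans with (sumR k (fun i => if Nat.eqb i i0 then f i else 0)).
  - rewrite (sumR_single k i0); [rewrite Nat.eqb_refl; lra | auto |].
    intros i _ Hne. apply Nat.eqb_neq in Hne. rewrite Hne. auto.
  - apply sumR_le. intros i Hik. destruct (Nat.eqb i i0); [lra | apply H; auto].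
Qed.

Lemma sumsq_zero k f : sumR k (fun i => f i * f i) = 0 -> forall i, (i < k)%nat -> f i = 0.
Proof.
  intros H i Hi.
  assert (f i * f i <= 0).
  { rewrite <- H. apply (sumR_term_le k (fun i => f i * f i)); auto. intros; nra. }
  nra.
Qed.

Lemma maxR_nonneg k f : 0 <= maxR k f.
Proof. induction k; simpl; [lra|]. eapply Rle_trans; [apply IHk | apply Rmax_l]. Qed.

Lemma maxR_ge k f i : (i < k)%nat -> f i <= maxR k f.
Proof.
  induction k; intros H; [lia|]. simpl. destruct (Nat.eq_dec i k) as [->|Hne].
  - apply Rmax_r.
  - eapply Rle_trans; [apply IHk; lia | apply Rmax_l].
Qed.

Lemma maxR_lub k f c : 0 <= c -> (forall i, (i < k)%nat -> f i <= c) -> maxR k f <= c.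
Proof. induction k; simpl; intros Hc H; auto. apply Rmax_lub; [apply IHk | apply H]; auto. Qed.

Lemma maxR_ext k f g : (forall i, (i < k)%nat -> f i = g i) -> maxR k f = maxR k g.
Proof.
  induction k; simpl; intros H; auto.
  rewrite IHk by (intros; apply H; lia). rewrite H by lia. auto.
Qed.

Lemma maxR_le k f g : (forall i, (i < k)%nat -> f i <= g i) -> maxR k f <= maxR k g.
Proof.
  intros H. apply maxR_lub; [apply maxR_nonneg|].
  intros i Hi. eapply Rle_trans; [apply H; auto | apply maxR_ge; auto].
Qed.

Lemma maxR_scal k c f : 0 <= c -> maxR k (fun i => c * f i) = c * maxR k f.
Proof. intros Hc. induction k; simpl; [lra|]. rewrite IHk. apply RmaxRmult; auto. Qed.

(** * Real powers and vector norms *)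

Lemma Rpower_gt0 x y : 0 < Rpower x y.
Proof. apply exp_pos. Qed.

Lemma rpow_nonneg x y : 0 <= rpow x y.
Proof. unfold rpow. destruct (Rlt_dec 0 x); [left; apply Rpower_gt0 | lra]. Qed.

Lemma rpow_pos x y : 0 < x -> rpow x y = Rpower x y.
Proof. unfold rpow. destruct (Rlt_dec 0 x); lra. Qed.

Lemma rpow_gt0 x y : 0 < x -> 0 < rpow x y.
Proof. intros. rewrite rpow_pos by auto. apply Rpower_gt0. Qed.

Lemma rpow_zero x y : x <= 0 -> rpow x y = 0.
Proof. unfold rpow. destruct (Rlt_dec 0 x); lra. Qed.

Lemma rpow_le x z y : 0 < y -> 0 <= x -> x <= z -> rpow x y <= rpow z y.
Proof.
  intros Hy Hx Hxz. destruct (Req_dec x 0) as [->|Hx0].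
  - rewrite rpow_zero by lra. apply rpow_nonneg.
  - rewrite !rpow_pos by lra. apply Rle_Rpower_l; lra.
Qed.

Lemma rpow_lt x z y : 0 < y -> 0 <= x -> x < z -> rpow x y < rpow z y.
Proof.
  intros Hy Hx Hxz. destruct (Req_dec x 0) as [->|Hx0].
  - rewrite rpow_zero by lra. apply rpow_gt0; lra.
  - rewrite !rpow_pos by lra. apply Rlt_Rpower_l; lra.
Qed.

Lemma rpow_le_inv x z y : 0 < y -> 0 <= z -> rpow x y <= rpow z y -> x <= z.
Proof. intros. destruct (Rle_lt_dec x z); auto. pose proof (rpow_lt z x y); lra. Qed.

Lemma rpow_rpow x y z : 0 <= x -> rpow (rpow x y) z = rpow x (y * z).
Proof.
  intros Hx. destruct (Req_dec x 0) as [->|Hx0].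
  - rewrite !(rpow_zero 0) by lra. reflexivity.
  - rewrite (rpow_pos x y), !rpow_pos by (try apply Rpower_gt0; lra). apply Rpower_mult.
Qed.

Lemma rpow_1 x : 0 <= x -> rpow x 1 = x.
Proof.
  intros. destruct (Req_dec x 0) as [->|Hx0]; [apply rpow_zero; lra|].
  rewrite rpow_pos by lra. apply Rpower_1; lra.
Qed.

Lemma rpow_inv_r x p : 0 <= x -> 0 < p -> rpow (rpow x p) (/ p) = x.
Proof. intros. rewrite rpow_rpow, Rinv_r by (auto; lra). apply rpow_1; auto. Qed.

Lemma rpow_inv_l x p : 0 <= x -> 0 < p -> rpow (rpow x (/ p)) p = x.
Proof. intros. rewrite rpow_rpow, Rinv_l by (auto; lra). apply rpow_1; auto. Qed.

Lemma rpow_mult x z y : 0 <= x -> 0 <= z -> rpow (x * z) y = rpow x y * rpow z y.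
Proof.
  intros Hx Hz. destruct (Req_dec x 0) as [->|Hx0].
  { rewrite Rmult_0_l, !(rpow_zero 0) by lra. lra. }
  destruct (Req_dec z 0) as [->|Hz0].
  { rewrite Rmult_0_r, !(rpow_zero 0) by lra. lra. }
  rewrite !rpow_pos by (try apply Rmult_lt_0_compat; lra). symmetry; apply Rpower_mult_distr; lra.
Qed.

Lemma rpow_2 x : 0 <= x -> rpow x 2 = x * x.
Proof.
  intros. destruct (Req_dec x 0) as [->|Hx0]; [rewrite rpow_zero; lra|].
  rewrite rpow_pos by lra. replace 2 with (INR 2) by (simpl; lra).
  rewrite Rpower_pow by lra. simpl; lra.
Qed.

Lemma rpow_abs_mul_2 x c : 0 <= c -> rpow (Rabs x * c) 2 = x * x * (c * c).
Proof.
  intros Hc. rewrite rpow_2 by (apply Rmult_le_pos; auto using Rabs_pos).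
  replace (x * x) with (Rabs x * Rabs x) by (rewrite <- Rabs_mult, Rabs_pos_eq; nra). ring.
Qed.

Lemma rpow_one y : rpow 1 y = 1.
Proof. rewrite rpow_pos by lra. unfold Rpower. rewrite ln_1, Rmult_0_r. apply exp_0. Qed.

Lemma vnorm_nonneg k v p : 0 <= vnorm k v p.
Proof. destruct p; simpl; [apply rpow_nonneg | apply maxR_nonneg]. Qed.

Lemma vnorm_ext_abs k v w p : (forall i, (i < k)%nat -> Rabs (v i) = Rabs (w i)) ->
  vnorm k v p = vnorm k w p.
Proof.
  intros H. destruct p; simpl.
  - f_equal. apply sumR_ext. intros. rewrite H; auto.
  - apply maxR_ext. intros; rewrite H; auto.
Qed.

Lemma vnorm_ext k v w p : (forall i, (i < k)%nat -> v i = w i) -> vnorm k v p = vnorm k w p.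
Proof. intros H. apply vnorm_ext_abs. intros; rewrite H; auto. Qed.

Lemma vnorm_mono k v w p : ext_pos p -> (forall i, (i < k)%nat -> Rabs (v i) <= Rabs (w i)) ->
  vnorm k v p <= vnorm k w p.
Proof.
  intros Hp H. destruct p; simpl in *.
  - apply rpow_le; [apply Rinv_0_lt_compat; auto | apply sumR_nonneg; intros; apply rpow_nonneg|].
    apply sumR_le. intros. apply rpow_le; auto. apply Rabs_pos.
  - apply maxR_le; auto.
Qed.

Lemma vnorm_scal k c v p : ext_pos p -> vnorm k (fun i => c * v i) p = Rabs c * vnorm k v p.
Proof.
  intros Hp. destruct p; simpl in *.
  - rewrite (sumR_ext k _ (fun i => rpow (Rabs c) p * rpow (Rabs (v i)) p)).
    + rewrite sumR_scal, rpow_mult, rpow_inv_r;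
        auto using Rabs_pos, rpow_nonneg, sumR_nonneg.
    + intros. rewrite Rabs_mult. apply rpow_mult; apply Rabs_pos.
  - rewrite (maxR_ext k _ (fun i => Rabs c * Rabs (v i))).
    + apply maxR_scal, Rabs_pos.
    + intros; apply Rabs_mult.
Qed.

Lemma vnorm_pos k v p i : ext_pos p -> (i < k)%nat -> v i <> 0 -> 0 < vnorm k v p.
Proof.
  intros Hp Hi Hv. destruct p; simpl in *.
  - apply rpow_gt0. eapply Rlt_le_trans; [| apply (sumR_term_le k _ i); auto].
    + apply rpow_gt0, Rabs_pos_lt; auto.
    + intros; apply rpow_nonneg.
  - eapply Rlt_le_trans; [| apply (maxR_ge k _ i); auto]. apply Rabs_pos_lt; auto.
Qed.

Lemma vnorm_zero k v p : (forall i, (i < k)%nat -> v i = 0) -> vnorm k v p = 0.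
Proof.
  intros H. destruct p; simpl.
  - rewrite sumR_zero; [apply rpow_zero; lra|].
    intros. rewrite H, Rabs_R0 by auto. apply rpow_zero; lra.
  - apply Rle_antisym; [| apply maxR_nonneg].
    apply maxR_lub; [lra|]. intros. rewrite H, Rabs_R0; auto; lra.
Qed.

Lemma vnorm_unit k i p : (i < k)%nat -> ext_pos p ->
  vnorm k (fun j => if Nat.eqb j i then 1 else 0) p = 1.
Proof.
  intros Hi Hp. destruct p; simpl in *.
  - rewrite (sumR_single k i), Nat.eqb_refl, Rabs_R1, !rpow_one; auto.
    intros j _ Hj. apply Nat.eqb_neq in Hj. rewrite Hj, Rabs_R0. apply rpow_zero; lra.
  - apply Rle_antisym.
    + apply maxR_lub; [lra|]. intros j _. destruct (Nat.eqb j i); rewrite ?Rabs_R1, ?Rabs_R0; lra.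
    + pose proof (maxR_ge k (fun j => Rabs (if Nat.eqb j i then 1 else 0)) i Hi) as H.
      simpl in H. rewrite Nat.eqb_refl, Rabs_R1 in H. auto.
Qed.

(** * Matrices *)

Module MathCompMatrix.
Import all_boot all_algebra Rstruct GRing.Theory.
Local Open Scope ring_scope.

Lemma sumR_big k (f : nat -> R) : sumR k f = \sum_(i < k) f i.
Proof.
elim: k => [|k IH]; first by rewrite big_ord0.
by rewrite big_ord_recr /= IH.
Qed.

(* Here [<] and [0] are MathComp's; [Peano.lt] and [R0] spell out those of [Defs]. *)
Lemma right_inverse_exists k (M : mat) :
  (forall x : nat -> R,
     (forall j, Peano.lt j k -> sumR k (fun i => Rmult (x i) (M i j)) = R0) ->
     forall i, Peano.lt i k -> x i = R0) ->
  exists W : mat, forall i j, Peano.lt i k -> Peano.lt j k -> mmul k M W i j = idm i j.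
Proof.
case: k => [|k] H; first by exists (fun _ _ => 0) => i j /ltP.
pose B : 'M[R]_k.+1 := \matrix_(i, j) M i j.
have fr : row_free B.
  rewrite -kermx_eq0; apply/eqP/row_matrixP => a; rewrite row0.
  pose r := row a (kermx B).
  have rB : r *m B = 0 by rewrite /r -row_mul mulmx_ker row0.
  rewrite -/r; apply/rowP => b; rewrite [RHS]mxE.
  pose x := fun c : nat => r 0 (inord c).
  have : x b = 0.
    apply: (H x); last by apply/ltP; apply: ltn_ord.
    move=> j /ltP lt_j; rewrite sumR_big.
    have := congr1 (fun X : 'M[R]_(1, k.+1) => X 0 (inord j)) rB; rewrite !mxE => E.
    apply: (etrans _ E); apply: eq_bigr => i _.
    by rewrite /x inord_val [B _ _]mxE inordK.
  by rewrite /x inord_val.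
have /row_freeP [C BC] := fr.
exists (fun a b => C (inord a) (inord b)) => i j /ltP lt_i /ltP lt_j.
rewrite /mmul sumR_big.
have := congr1 (fun X : 'M[R]_(k.+1) => X (inord i) (inord j)) BC; rewrite !mxE => E.
transitivity ((inord i == inord j :> 'I_k.+1)%:R : R).
  by rewrite -E; apply: eq_bigr => l _; rewrite !mxE inord_val inordK.
have -> : (inord i == inord j :> 'I_k.+1) = (i == j).
  by apply/eqP/eqP => [/(congr1 val)|->//]; rewrite /= !inordK.
rewrite /idm; case: (Nat.eqb_spec i j) => [->|/eqP ne]; first by rewrite eqxx.
by rewrite (negbTE ne).
Qed.

End MathCompMatrix.

Lemma mmul_assoc a b X Y Z i j :
  mmul b (mmul a X Y) Z i j = mmul a X (mmul b Y Z) i j.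
Proof.
  unfold mmul.
  rewrite (sumR_ext b _ (fun l => sumR a (fun k => X i k * Y k l * Z l j)))
    by (intros; rewrite <- sumR_scal_r; auto).
  rewrite sumR_swap. apply sumR_ext. intros. rewrite <- sumR_scal. apply sumR_ext; intros; ring.
Qed.

Lemma mmul_minus_l k X Y Z i j :
  mmul k X Z i j - mmul k Y Z i j = mmul k (fun a b => X a b - Y a b) Z i j.
Proof. unfold mmul. rewrite <- sumR_minus. apply sumR_ext; intros; ring. Qed.

Lemma mmul_minus_r k X Y Z i j :
  mmul k Z X i j - mmul k Z Y i j = mmul k Z (fun a b => X a b - Y a b) i j.
Proof. unfold mmul. rewrite <- sumR_minus. apply sumR_ext; intros; ring. Qed.

Lemma mmul_ext_l k X X' Z i j : (forall l, (l < k)%nat -> X i l = X' i l) ->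
  mmul k X Z i j = mmul k X' Z i j.
Proof. intros H. unfold mmul. apply sumR_ext. intros. rewrite H; auto. Qed.

Lemma mmul_ext_r k X Z Z' i j : (forall l, (l < k)%nat -> Z l j = Z' l j) ->
  mmul k X Z i j = mmul k X Z' i j.
Proof. intros H. unfold mmul. apply sumR_ext. intros. rewrite H; auto. Qed.

Lemma mmul_idm_l k X i j : (i < k)%nat -> mmul k idm X i j = X i j.
Proof.
  intros Hi. unfold mmul. rewrite (sumR_single k i); auto.
  - unfold idm. rewrite Nat.eqb_refl. ring.
  - intros l _ Hl. unfold idm. apply not_eq_sym, Nat.eqb_neq in Hl. rewrite Hl. ring.
Qed.

Lemma mmul_idm_r k X i j : (j < k)%nat -> mmul k X idm i j = X i j.
Proof.
  intros Hj. unfold mmul. rewrite (sumR_single k j); auto.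
  - unfold idm. rewrite Nat.eqb_refl. ring.
  - intros l _ Hl. unfold idm. apply Nat.eqb_neq in Hl. rewrite Hl. ring.
Qed.

Definition is_rinv (k : nat) (M W : mat) : Prop :=
  forall i j, (i < k)%nat -> (j < k)%nat -> mmul k M W i j = idm i j.

Lemma minv_rinv k M : (exists W, is_rinv k M W) -> is_rinv k M (minv k M).
Proof. apply (epsilon_spec (inhabits (fun _ _ => 0)) (is_rinv k M)). Qed.

Lemma minv_unique k M W : is_rinv k M W -> is_rinv k W M ->
  forall i j, (i < k)%nat -> (j < k)%nat -> minv k M i j = W i j.
Proof.
  intros HMW HWM i j Hi Hj.
  assert (HM := minv_rinv k M (ex_intro _ W HMW)).
  transitivity (mmul k (mmul k W M) (minv k M) i j).
  - rewrite (mmul_ext_l k _ idm) by (intros; apply HWM; auto). rewrite mmul_idm_l; auto.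
  - rewrite mmul_assoc, (mmul_ext_r k _ _ idm) by (intros; apply HM; auto).
    apply mmul_idm_r; auto.
Qed.

(* [x^T (A A^T) x = |A^T x|^2], so a left null vector of the Gram matrix is a
   left null vector of [A]. *)
Lemma gram_rinv_exists m n A : full_rank m n A -> exists W, is_rinv m (mmul n A (tr A)) W.
Proof.
  intros Hf. apply MathCompMatrix.right_inverse_exists. intros x Hx.
  apply Hf, (sumsq_zero n (fun l => sumR m (fun i => x i * A i l))).
  rewrite (sumR_ext n _ (fun l => sumR m (fun j => x j * sumR m (fun i => x i * A i l * A j l)))).
  2:{ intros l Hl. cbv beta. rewrite <- sumR_scal_r. apply sumR_ext. intros j Hj.
      rewrite <- !sumR_scal. apply sumR_ext; intros; ring. }
  rewrite sumR_swap. apply sumR_zero. intros j Hj.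
  rewrite sumR_scal, sumR_swap.
  rewrite (sumR_ext m _ (fun i => x i * mmul n A (tr A) i j)), (Hx j Hj); [ring|].
  intros. unfold mmul, tr. rewrite <- sumR_scal. apply sumR_ext; intros; ring.
Qed.

Lemma dagger_in_G m n A : full_rank m n A -> in_G m n A (dagger m n A).
Proof.
  intros Hf i j Hi Hj. unfold dagger. rewrite <- mmul_assoc.
  apply minv_rinv; auto. apply gram_rinv_exists; auto.
Qed.

Lemma dagger_of_gram_inverse m n A W :
  is_rinv m (mmul n A (tr A)) W -> is_rinv m W (mmul n A (tr A)) ->
  forall l j, (j < m)%nat -> dagger m n A l j = sumR m (fun i => A i l * W i j).
Proof.
  intros H1 H2 l j Hj. unfold dagger, mmul at 1, tr. apply sumR_ext.
  intros i Hi. rewrite (minv_unique m _ W); auto.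
Qed.

Lemma in_G_ext m n A X X' : (forall l j, (l < n)%nat -> (j < m)%nat -> X l j = X' l j) ->
  in_G m n A X -> in_G m n A X'.
Proof.
  intros H HX i j Hi Hj. rewrite <- (HX i j Hi Hj). apply mmul_ext_r. intros; symmetry; auto.
Qed.

Lemma rowN_fin n p q M :
  rowN n p (Fin q) M = rpow (sumR n (fun i => rpow (vnorm n (M i) p) q)) (/ q).
Proof.
  unfold rowN, rownorm. simpl. f_equal. apply sumR_ext. intros.
  rewrite Rabs_pos_eq; auto. apply vnorm_nonneg.
Qed.

Lemma rowN_mmul_ext m n p q A X X' :
  (forall i l, (i < n)%nat -> (l < m)%nat -> X i l = X' i l) ->
  rowN n p q (mmul m X A) = rowN n p q (mmul m X' A).
Proof.
  intros H. unfold rowN, rownorm. apply vnorm_ext. intros. apply vnorm_ext. intros.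
  apply mmul_ext_l. intros; auto.
Qed.

Lemma in_pginv_rowN_ext m n A p q X X' :
  (forall l j, (l < n)%nat -> (j < m)%nat -> X l j = X' l j) ->
  in_pginv m n A (rowN n p q) X -> in_pginv m n A (rowN n p q) X'.
Proof.
  intros H [HG Hopt]. split; [eapply in_G_ext; eauto|].
  intros Y HY. rewrite <- (rowN_mmul_ext m n p q A X X' H). auto.
Qed.

(* For [m = 1] the product [X A] is the rank-one matrix [x a]. *)
Lemma rowN_rank_one n A X p q : ext_pos p -> ext_pos q ->
  rowN n p q (mmul 1 X A) = vnorm n (A 0%nat) p * entN n 1 q X.
Proof.
  intros Hp Hq. unfold rowN, rownorm, entN, entnorm. rewrite Nat.mul_1_r.
  rewrite (vnorm_ext n (fun k => X (k / 1)%nat (k mod 1)%nat) (fun k => X k 0%nat))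
    by (intros; rewrite Nat.div_1_r, Nat.mod_1_r; auto).
  rewrite (vnorm_ext n _ (fun i => Rabs (X i 0%nat) * vnorm n (A 0%nat) p)).
  2:{ intros i Hi. rewrite <- vnorm_scal by auto. apply vnorm_ext_abs. intros j Hj.
      unfold mmul. simpl. rewrite Rplus_0_l, !Rabs_mult, ?Rabs_Rabsolu. auto. }
  rewrite (vnorm_ext_abs n _ (fun i => vnorm n (A 0%nat) p * X i 0%nat)).
  - rewrite vnorm_scal, Rabs_pos_eq by (auto; apply vnorm_nonneg). auto.
  - intros. rewrite !Rabs_mult, ?Rabs_Rabsolu. ring.
Qed.

Lemma in_G_vnorm_row_pos n A X p : ext_pos p -> in_G 1 n A X -> 0 < vnorm n (A 0%nat) p.
Proof.
  intros Hp HX.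
  destruct (classic (exists l, (l < n)%nat /\ A 0%nat l <> 0)) as [[l [Hl Hnz]]|Hno].
  - apply (vnorm_pos n _ p l); auto.
  - exfalso. specialize (HX 0%nat 0%nat ltac:(lia) ltac:(lia)). unfold mmul, idm in HX.
    simpl in HX. rewrite sumR_zero in HX; [lra|].
    intros l Hl. destruct (Req_dec (A 0%nat l) 0) as [->|Hnz]; [ring|].
    exfalso; eauto.
Qed.

Lemma pginv_rank_one n A p q X : ext_pos p -> ext_pos q ->
  in_pginv 1 n A (rowN n p q) X <-> in_ginv 1 n A (entN n 1 q) X.
Proof.
  intros Hp Hq.
  split; intros [HG Hopt]; split; auto; intros Y HY; specialize (Hopt Y HY);
    pose proof (in_G_vnorm_row_pos n A X p Hp HG); rewrite !rowN_rank_one in * by auto.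
  - apply Rmult_le_reg_l in Hopt; auto.
  - apply Rmult_le_compat_l; lra.
Qed.

(** * The Frobenius case *)

Definition frob (n : nat) (M : mat) : R := sumR n (fun i => sumR n (fun j => M i j * M i j)).

Definition frob_dot (n : nat) (M N : mat) : R :=
  sumR n (fun i => sumR n (fun j => M i j * N i j)).

Lemma rowN_22 n M : rowN n (Fin 2) (Fin 2) M = rpow (frob n M) (/ 2).
Proof.
  rewrite rowN_fin. unfold frob. f_equal. apply sumR_ext. intros i Hi. simpl.
  rewrite rpow_inv_l by (try apply sumR_nonneg; intros; try apply rpow_nonneg; lra).
  apply sumR_ext. intros. rewrite rpow_2, <- Rabs_mult, Rabs_pos_eq by (try apply Rabs_pos; nra).
  auto.
Qed.

Lemma frob_nonneg n M : 0 <= frob n M.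
Proof. apply sumR_nonneg; intros; apply sumR_nonneg; intros; nra. Qed.

Lemma frob_plus n M N :
  frob n (fun i j => M i j + N i j) = frob n M + 2 * frob_dot n M N + frob n N.
Proof.
  unfold frob, frob_dot. rewrite <- sumR_scal, <- !sumR_plus. apply sumR_ext. intros.
  rewrite <- sumR_scal, <- !sumR_plus. apply sumR_ext. intros. ring.
Qed.

Lemma frob_dot_dagger_null m n A Z :
  (forall i j, (i < m)%nat -> (j < m)%nat -> mmul n A Z i j = 0) ->
  frob_dot n (mmul m (dagger m n A) A) (mmul m Z A) = 0.
Proof.
  intros HZ. set (W := minv m (mmul n A (tr A))). unfold frob_dot.
  rewrite (sumR_ext n _
    (fun i => sumR m (fun a => sumR n (fun j => mmul m W A a j * (A a i * mmul m Z A i j))))).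
  2:{ intros i Hi. rewrite sumR_swap. apply sumR_ext. intros j Hj.
      unfold dagger. fold W. rewrite mmul_assoc. unfold mmul at 1.
      rewrite <- sumR_scal_r. apply sumR_ext. intros. unfold tr. ring. }
  rewrite sumR_swap. apply sumR_zero. intros a Ha.
  rewrite sumR_swap. apply sumR_zero. intros j Hj.
  rewrite sumR_scal.
  change (sumR n (fun i => A a i * mmul m Z A i j)) with (mmul n A (mmul m Z A) a j).
  rewrite <- mmul_assoc, (mmul_ext_l m (mmul n A Z) (fun _ _ => 0)) by (intros; apply HZ; auto).
  replace (mmul m (fun _ _ => 0) A a j) with 0 by (symmetry; apply sumR_zero; intros; ring).
  ring.
Qed.

(* Pythagoras: [Y A = A^+ A + (Y - A^+) A] with orthogonal summands. *)
Lemma frob_dagger_min m n A Y : full_rank m n A -> in_G m n A Y ->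
  frob n (mmul m (dagger m n A) A) <= frob n (mmul m Y A).
Proof.
  intros Hf HY. set (D := dagger m n A). set (Z := fun a b => Y a b - D a b).
  assert (HD : in_G m n A D) by (apply dagger_in_G; auto).
  assert (HZ : forall i j, (i < m)%nat -> (j < m)%nat -> mmul n A Z i j = 0).
  { intros i j Hi Hj. unfold Z. rewrite <- mmul_minus_r, HY, HD by auto. ring. }
  replace (frob n (mmul m Y A)) with (frob n (fun i j => mmul m D A i j + mmul m Z A i j)).
  - rewrite frob_plus. unfold D. rewrite frob_dot_dagger_null by auto.
    pose proof (frob_nonneg n (mmul m Z A)). lra.
  - unfold frob. apply sumR_ext. intros. apply sumR_ext. intros. unfold Z.
    rewrite <- mmul_minus_l. ring_simplify. auto.
Qed.

Lemma dagger_pginv_22 m n A : full_rank m n A ->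
  in_pginv m n A (rowN n (Fin 2) (Fin 2)) (dagger m n A).
Proof.
  intros Hf. split; [apply dagger_in_G; auto|].
  intros Y HY. rewrite !rowN_22. apply rpow_le; [lra | apply frob_nonneg |].
  apply frob_dagger_min; auto.
Qed.

(** * Critical points *)

Lemma local_min_derivable_pt_lim f c l d : 0 < d -> derivable_pt_lim f c l ->
  (forall x, c - d < x -> x < c + d -> f c <= f x) -> l = 0.
Proof.
  intros Hd Hf Hmin.
  rewrite <- (derive_pt_eq_0 f c l (exist _ l Hf) Hf).
  apply (deriv_minimum f (c - d) (c + d)); auto; lra.
Qed.

Lemma pginv_critical m n A mu (X : R -> mat) g t0 l d : 0 < d ->
  (forall t, in_G m n A (X t)) ->
  (forall t, t0 - d < t -> t < t0 + d ->
     mu (mmul m (X t0) A) <= mu (mmul m (X t) A) -> g t0 <= g t) ->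
  derivable_pt_lim g t0 l -> in_pginv m n A mu (X t0) -> l = 0.
Proof.
  intros Hd HG Hmono Hg [_ Hopt].
  apply (local_min_derivable_pt_lim g t0 l d); auto.
Qed.

Lemma derivable_pt_lim_Rpower_affine a b p : 0 < a ->
  derivable_pt_lim (fun t => Rpower (a + b * t) p) 0 (p * Rpower a (p - 1) * b).
Proof.
  intros Ha.
  assert (Hlin : derivable_pt_lim (fun t => a + b * t) 0 (0 + b * 1)).
  { apply (derivable_pt_lim_plus (fun _ => a) (fun t => b * t)).
    - apply derivable_pt_lim_const.
    - apply derivable_pt_lim_scal, derivable_pt_lim_id. }
  rewrite Rplus_0_l, Rmult_1_r in Hlin.
  assert (Hpow := derivable_pt_lim_power (a + b * 0) p ltac:(lra)).
  pose proof (derivable_pt_lim_comp _ (fun x => Rpower x p) 0 b _ Hlin Hpow) as H.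
  unfold comp in H. rewrite Rmult_0_r, Rplus_0_r in H.
  exact H.
Qed.

(** * The matrix [A4] *)

Definition A4 (i j : nat) : R :=
  match i with
  | O => match j with O => 1 | 1%nat => 2 | _ => 0 end
  | S _ => if Nat.eqb j (S i) then 1 else 0
  end.

(* A line of generalized inverses of [A4] through [X4 0 = A4^+]. *)
Definition X4 (t : R) (l j : nat) : R :=
  match j with
  | O => match l with O => 1/5 + t | 1%nat => 2/5 - t/2 | _ => 0 end
  | S _ => if Nat.eqb l (S j) then 1 else 0
  end.

Definition gram4_inv (i j : nat) : R :=
  if Nat.eqb i j then (if Nat.eqb i 0 then / 5 else 1) else 0.

(* The derivative of [t |-> (1/5 + t)^q + (2/5 - t/2)^q] at [0] is
   [q 5^(1-q) (1 - 2^(q-2))]. *)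
Lemma A4_slope_neq0 q : 0 < q -> q <> 2 ->
  q * Rpower (1/5) (q - 1) * 1 + q * Rpower (2/5) (q - 1) * - / 2 <> 0.
Proof.
  intros Hq Hq2 E.
  replace (2/5) with (2 * (1/5)) in E by field.
  rewrite <- Rpower_mult_distr in E by lra.
  assert (H2 : Rpower 2 (q - 1) <> Rpower 2 1).
  { destruct (Rtotal_order (q - 1) 1) as [L|[L|L]];
      [pose proof (Rpower_lt 2 _ _ ltac:(lra) L) | lra | pose proof (Rpower_lt 2 _ _ ltac:(lra) L)]; lra. }
  rewrite Rpower_1 in H2 by lra.
  pose proof (Rpower_gt0 (1/5) (q - 1)).
  apply H2. apply (Rmult_eq_reg_l (q * Rpower (1/5) (q - 1) / 2)); [lra|].
  apply Rmult_integral_contrapositive; split; [nra | lra].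
Qed.

Section A4.
Variables m n : nat.
Hypothesis Hm : (1 <= m)%nat.
Hypothesis Hmn : (m < n)%nat.

Lemma A4_0l l : (2 <= l)%nat -> A4 0 l = 0.
Proof. intros. destruct l as [|[|]]; auto; lia. Qed.

Lemma A4_Sl k l : A4 (S k) l = if Nat.eqb l (S (S k)) then 1 else 0.
Proof. reflexivity. Qed.

Lemma A4_row0_sum (f : nat -> R) : sumR n (fun l => A4 0 l * f l) = f 0%nat + 2 * f 1%nat.
Proof.
  rewrite (sumR_trunc n 2) by (try lia; intros; rewrite A4_0l by lia; ring). simpl. ring.
Qed.

Lemma A4_rowS_sum k (f : nat -> R) : (S k < m)%nat ->
  sumR n (fun l => A4 (S k) l * f l) = f (S (S k)).
Proof.
  intros Hk. rewrite (sumR_single n (S (S k))) by (try lia; intros l _ H;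
    rewrite A4_Sl; apply Nat.eqb_neq in H; rewrite H; ring).
  rewrite A4_Sl, Nat.eqb_refl. ring.
Qed.

Lemma A4_full : full_rank m n A4.
Proof.
  intros c Hc [|k] Hk.
  - specialize (Hc 0%nat ltac:(lia)). rewrite (sumR_single m 0) in Hc; [simpl in Hc; lra | lia |].
    intros [|l] _ H; [lia | rewrite A4_Sl; simpl; ring].
  - specialize (Hc (S (S k)) ltac:(lia)). rewrite (sumR_single m (S k)) in Hc; auto.
    + rewrite A4_Sl, Nat.eqb_refl in Hc. lra.
    + intros [|l] _ H; [rewrite A4_0l by lia; ring|].
      rewrite A4_Sl. destruct (Nat.eqb_spec (S (S k)) (S (S l))); [lia | ring].
Qed.

Lemma A4_gram i j : (i < m)%nat -> (j < m)%nat ->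
  mmul n A4 (tr A4) i j = if Nat.eqb i j then (if Nat.eqb i 0 then 5 else 1) else 0.
Proof.
  intros Hi Hj. unfold mmul, tr. destruct i as [|k].
  - rewrite A4_row0_sum. destruct j as [|[|j]]; simpl; ring.
  - rewrite A4_rowS_sum by auto. destruct j as [|j]; [rewrite A4_0l by lia; simpl; ring|].
    rewrite A4_Sl. simpl.
    destruct (Nat.eqb_spec k j); destruct (Nat.eqb_spec (S (S k)) (S (S j))); try lia; ring.
Qed.

Lemma A4_gram_inv :
  is_rinv m (mmul n A4 (tr A4)) gram4_inv /\ is_rinv m gram4_inv (mmul n A4 (tr A4)).
Proof.
  split; intros i j Hi Hj; unfold mmul at 1.
  - rewrite (sumR_single m j); auto.
    + rewrite A4_gram by auto. unfold gram4_inv, idm. rewrite Nat.eqb_refl.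
      destruct (Nat.eqb_spec i j) as [->|]; [destruct (Nat.eqb j 0); field | ring].
    + intros l Hl H. unfold gram4_inv. apply Nat.eqb_neq in H. rewrite H. ring.
  - rewrite (sumR_single m i); auto.
    + rewrite A4_gram by auto. unfold gram4_inv, idm. rewrite Nat.eqb_refl.
      destruct (Nat.eqb_spec i j) as [->|]; [destruct (Nat.eqb j 0); field | ring].
    + intros l Hl H. unfold gram4_inv. apply not_eq_sym, Nat.eqb_neq in H. rewrite H. ring.
Qed.

Lemma A4_dagger l j : (l < n)%nat -> (j < m)%nat -> dagger m n A4 l j = X4 0 l j.
Proof.
  intros Hl Hj. destruct A4_gram_inv as [H1 H2].
  rewrite (dagger_of_gram_inverse m n A4 gram4_inv H1 H2 l j Hj).
  rewrite (sumR_single m j); auto.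
  - unfold gram4_inv, X4. rewrite Nat.eqb_refl.
    destruct j as [|j]; simpl; [destruct l as [|[|l]]; simpl; field|].
    destruct (Nat.eqb l (S (S j))); field.
  - intros i _ H. unfold gram4_inv. apply Nat.eqb_neq in H. rewrite H. ring.
Qed.

Lemma X4_in_G t : in_G m n A4 (X4 t).
Proof.
  intros [|k] j Hk Hj; unfold mmul.
  - rewrite A4_row0_sum. unfold X4, idm. destruct j as [|[|j]]; simpl; field.
  - rewrite A4_rowS_sum by auto. unfold X4, idm. destruct j as [|j]; [reflexivity|].
    simpl. destruct (Nat.eqb_spec k j); destruct (Nat.eqb_spec (S (S k)) (S (S j))); try lia; auto.
Qed.

Lemma mmul_A4_row01 Y i j : (j <= 1)%nat -> mmul m Y A4 i j = Y i 0%nat * A4 0 j.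
Proof.
  intros Hj. unfold mmul. rewrite (sumR_single m 0); [reflexivity | lia |].
  intros [|l] _ H; [lia|]. rewrite A4_Sl. destruct (Nat.eqb_spec j (S (S l))); [lia | ring].
Qed.

Lemma mmul_A4_unit Y i j : in_G m n A4 Y -> (2 <= i <= m)%nat ->
  mmul m Y A4 i j = if Nat.eqb j i then 1 else 0.
Proof.
  intros HY Hi. destruct i as [|[|k]]; try lia.
  assert (HYrow : forall j, (j < m)%nat -> Y (S (S k)) j = idm (S k) j).
  { intros j' Hj'. rewrite <- (HY (S k) j') by (auto; lia). unfold mmul.
    rewrite A4_rowS_sum; auto; lia. }
  unfold mmul. rewrite (sumR_single m (S k)); [| lia |].
  - rewrite HYrow by lia. unfold idm. rewrite Nat.eqb_refl, A4_Sl. ring.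
  - intros l Hl H. rewrite HYrow by lia. unfold idm.
    apply not_eq_sym, Nat.eqb_neq in H. rewrite H. ring.
Qed.

Lemma mmul_X4_A4_low t i j : (m < i)%nat -> mmul m (X4 t) A4 i j = 0.
Proof.
  intros Hi. unfold mmul. apply sumR_zero. intros [|l] Hl; unfold X4.
  - destruct i as [|[|]]; try lia; ring.
  - destruct (Nat.eqb_spec i (S (S l))); [lia | ring].
Qed.

Definition a4norm (p : ext) : R := vnorm n (A4 0%nat) p.

Definition tail4 (q : R) : R :=
  sumR (n - 2) (fun i => rpow (if Nat.leb (2 + i) m then 1 else 0) q).

Lemma tail4_nonneg q : 0 <= tail4 q.
Proof. apply sumR_nonneg. intros. apply rpow_nonneg. Qed.

Lemma a4norm_pos p : ext_pos p -> 0 < a4norm p.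
Proof. intros. apply (vnorm_pos n _ p 0%nat); simpl; auto; lia || lra. Qed.

Lemma vnorm_mmul_A4_row01 Y i p : ext_pos p -> (i <= 1)%nat ->
  Rabs (Y i 0%nat) * a4norm p <= vnorm n (mmul m Y A4 i) p.
Proof.
  intros Hp Hi. unfold a4norm. rewrite <- vnorm_scal by auto. apply vnorm_mono; auto.
  intros j Hj. destruct (le_lt_dec j 1).
  - rewrite mmul_A4_row01 by auto. lra.
  - rewrite A4_0l, Rmult_0_r, Rabs_R0 by lia. apply Rabs_pos.
Qed.

Lemma vnorm_mmul_A4_unit Y i p : ext_pos p -> in_G m n A4 Y -> (2 <= i <= m)%nat ->
  vnorm n (mmul m Y A4 i) p = 1.
Proof.
  intros Hp HY Hi. rewrite (vnorm_ext n _ (fun j => if Nat.eqb j i then 1 else 0)).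
  - apply vnorm_unit; auto. lia.
  - intros. apply mmul_A4_unit; auto.
Qed.

Lemma mmul_X4_A4_row01 t i j : (i <= 1)%nat -> mmul m (X4 t) A4 i j = X4 t i 0%nat * A4 0 j.
Proof.
  intros Hi. unfold mmul. rewrite (sumR_single m 0); [reflexivity | lia |].
  intros [|l] _ H; [lia|]. unfold X4. destruct (Nat.eqb_spec i (S (S l))); [lia | ring].
Qed.

Lemma rowN_X4 t p q : ext_pos p -> 0 < q ->
  rowN n p (Fin q) (mmul m (X4 t) A4) =
  rpow (rpow (Rabs (1/5 + t) * a4norm p) q + rpow (Rabs (2/5 - t/2) * a4norm p) q + tail4 q) (/ q).
Proof.
  intros Hp Hq.
  assert (Hrow : forall i, (i <= 1)%nat ->
            vnorm n (mmul m (X4 t) A4 i) p = Rabs (X4 t i 0%nat) * a4norm p).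
  { intros i Hi. unfold a4norm. rewrite <- vnorm_scal by auto.
    apply vnorm_ext. intros; apply mmul_X4_A4_row01; auto. }
  rewrite rowN_fin, sumR_first_two, !Hrow by lia. unfold tail4. f_equal. f_equal.
  apply sumR_ext. intros i Hi. f_equal. destruct (Nat.leb_spec (2 + i) m).
  - apply vnorm_mmul_A4_unit; auto using X4_in_G. lia.
  - apply vnorm_zero. intros. apply mmul_X4_A4_low. lia.
Qed.

Lemma rowN_A4_lower Y p q : ext_pos p -> 0 < q -> in_G m n A4 Y ->
  rpow (rpow (Rabs (Y 0%nat 0%nat) * a4norm p) q + rpow (Rabs (Y 1%nat 0%nat) * a4norm p) q
        + tail4 q) (/ q) <= rowN n p (Fin q) (mmul m Y A4).
Proof.
  intros Hp Hq HY. pose proof (a4norm_pos p Hp).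
  rewrite rowN_fin, (sumR_first_two n) by lia.
  apply rpow_le; [apply Rinv_0_lt_compat; auto | |].
  { repeat apply Rplus_le_le_0_compat; auto using rpow_nonneg, tail4_nonneg. }
  repeat apply Rplus_le_compat.
  - apply rpow_le; auto using vnorm_mmul_A4_row01. apply Rmult_le_pos; auto using Rabs_pos; lra.
  - apply rpow_le; auto using vnorm_mmul_A4_row01. apply Rmult_le_pos; auto using Rabs_pos; lra.
  - unfold tail4. apply sumR_le. intros i Hi. destruct (Nat.leb_spec (2 + i) m).
    + rewrite vnorm_mmul_A4_unit by (auto; lia). lra.
    + rewrite rpow_zero by lra. apply rpow_nonneg.
Qed.

Lemma A4_dagger_pginv_q2 p : ext_pos p -> in_pginv m n A4 (rowN n p (Fin 2)) (dagger m n A4).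
Proof.
  intros Hp. apply (in_pginv_rowN_ext m n A4 p (Fin 2) (X4 0));
    [intros; symmetry; apply A4_dagger; auto|].
  split; [apply X4_in_G|]. intros Y HY.
  eapply Rle_trans; [| apply rowN_A4_lower; auto; lra].
  rewrite rowN_X4 by (auto; lra). pose proof (a4norm_pos p Hp).
  apply rpow_le; [lra | repeat apply Rplus_le_le_0_compat; auto using rpow_nonneg, tail4_nonneg |].
  rewrite !rpow_abs_mul_2 by lra.
  assert (Hrow0 : Y 0%nat 0%nat + 2 * Y 1%nat 0%nat = 1).
  { pose proof (HY 0%nat 0%nat ltac:(lia) ltac:(lia)) as H0.
    unfold mmul in H0. rewrite A4_row0_sum in H0. unfold idm in H0. simpl in H0. lra. }
  set (a := Y 0%nat 0%nat) in *. set (b := Y 1%nat 0%nat) in *. set (c := a4norm p) in *.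
  assert (Hsq : a * a + b * b - 1/5 = (5 * b - 2) * (5 * b - 2) / 5).
  { replace a with (1 - 2 * b) by lra. field. }
  assert (0 <= (a * a + b * b - 1/5) * (c * c)).
  { rewrite Hsq. apply Rmult_le_pos; [apply Rmult_le_pos; [apply Rle_0_sqr | lra] | apply Rle_0_sqr]. }
  nra.
Qed.

Lemma A4_dagger_not_pginv p q : ext_pos p -> 0 < q -> q <> 2 ->
  ~ in_pginv m n A4 (rowN n p (Fin q)) (dagger m n A4).
Proof.
  intros Hp Hq Hq2 Hopt.
  set (g := fun t => Rpower (1/5 + 1 * t) q + Rpower (2/5 + - / 2 * t) q).
  assert (Hg : derivable_pt_lim g 0
                 (q * Rpower (1/5) (q - 1) * 1 + q * Rpower (2/5) (q - 1) * - / 2)).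
  { apply derivable_pt_lim_plus; apply derivable_pt_lim_Rpower_affine; lra. }
  apply (A4_slope_neq0 q Hq Hq2).
  apply (pginv_critical m n A4 (rowN n p (Fin q)) X4 g 0 _ (1/10)); auto using X4_in_G; [lra | |].
  - intros t Ht1 Ht2 Hle. pose proof (a4norm_pos p Hp). pose proof (tail4_nonneg q).
    rewrite !rowN_X4 in Hle by auto.
    apply rpow_le_inv in Hle;
      [| apply Rinv_0_lt_compat; auto | repeat apply Rplus_le_le_0_compat; auto using rpow_nonneg].
    rewrite !Rabs_pos_eq, !rpow_mult, !rpow_pos in Hle by lra.
    unfold g. apply (Rmult_le_reg_r (Rpower (a4norm p) q)); [apply Rpower_gt0|].
    replace (1/5 + 1 * 0) with (1/5 + 0) by ring. replace (2/5 + - / 2 * 0) with (2/5 - 0/2) by field.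
    replace (1/5 + 1 * t) with (1/5 + t) by ring. replace (2/5 + - / 2 * t) with (2/5 - t/2) by field.
    lra.
  - eapply in_pginv_rowN_ext; [| exact Hopt]. intros; apply A4_dagger; auto.
Qed.

Lemma A4_dagger_pginv_iff p q : ext_pos p -> 0 < q ->
  in_pginv m n A4 (rowN n p (Fin q)) (dagger m n A4) <-> q = 2.
Proof.
  intros Hp Hq. split.
  - intros H. destruct (Req_dec q 2) as [|Hq2]; auto.
    exfalso. exact (A4_dagger_not_pginv p q Hp Hq Hq2 H).
  - intros ->. apply A4_dagger_pginv_q2; auto.
Qed.

End A4.

(** * The matrix [A5] *)

Definition A5 (i j : nat) : R :=
  match i with
  | O => match j with O => 2 | 1%nat => -1 | _ => 0 end
  | 1%nat => match j with O => 3 | 2%nat => -1 | _ => 0 end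
  | _ => if Nat.eqb j (S i) then 1 else 0
  end.

(* [X5 0 = A5^+]; the direction [-(1,2,3)/14] put in column [1] is annihilated by [A5]. *)
Definition X5 (t : R) (l j : nat) : R :=
  match j with
  | O => match l with O => 2/14 | 1%nat => -10/14 | 2%nat => 6/14 | _ => 0 end
  | 1%nat => match l with O => (3 - t)/14 | 1%nat => (6 - 2*t)/14 | 2%nat => (-5 - 3*t)/14 | _ => 0 end
  | _ => if Nat.eqb l (S j) then 1 else 0
  end.

Definition is_blk2 (P : mat) : Prop :=
  forall i j, (2 <= i \/ 2 <= j)%nat -> P i j = if Nat.eqb i j then 1 else 0.

Lemma mmul_blk2 m P Q i j : (2 <= m)%nat -> is_blk2 P -> is_blk2 Q -> (i < m)%nat -> (j < m)%nat ->
  mmul m P Q i j =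
  if (Nat.ltb i 2 && Nat.ltb j 2)%bool then P i 0%nat * Q 0%nat j + P i 1%nat * Q 1%nat j
  else (if Nat.eqb i j then 1 else 0).
Proof.
  intros Hm HP HQ Hi Hj. unfold mmul. destruct (Nat.ltb_spec i 2).
  - destruct (Nat.ltb_spec j 2); simpl.
    + rewrite (sumR_trunc m 2); auto; [simpl; ring|].
      intros l Hl _. rewrite (HP i l) by lia. destruct (Nat.eqb_spec i l); [lia | ring].
    + destruct (Nat.eqb_spec i j); [lia|].
      apply sumR_zero. intros l Hl. destruct (Nat.ltb_spec l 2).
      * rewrite (HQ l j) by lia. destruct (Nat.eqb_spec l j); [lia | ring].
      * rewrite (HP i l) by lia. destruct (Nat.eqb_spec i l); [lia | ring].
  - simpl. rewrite (sumR_single m i); auto.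
    + rewrite (HP i i), Nat.eqb_refl, (HQ i j) by lia. ring.
    + intros l _ Hne. rewrite (HP i l) by lia. destruct (Nat.eqb_spec i l); [congruence | ring].
Qed.

Definition gram5 (i j : nat) : R :=
  match i, j with
  | O, O => 5 | O, 1%nat => 6 | 1%nat, O => 6 | 1%nat, 1%nat => 10
  | _, _ => if Nat.eqb i j then 1 else 0 end.

Definition gram5_inv (i j : nat) : R :=
  match i, j with
  | O, O => 10/14 | O, 1%nat => -6/14 | 1%nat, O => -6/14 | 1%nat, 1%nat => 5/14
  | _, _ => if Nat.eqb i j then 1 else 0 end.

Lemma gram5_blk2 : is_blk2 gram5.
Proof. intros i j H. destruct i as [|[|i]]; destruct j as [|[|j]]; auto; lia. Qed.

Lemma gram5_inv_blk2 : is_blk2 gram5_inv.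
Proof. intros i j H. destruct i as [|[|i]]; destruct j as [|[|j]]; auto; lia. Qed.

Lemma A5_lo i l : (i < 2)%nat -> (3 <= l)%nat -> A5 i l = 0.
Proof. intros. destruct i as [|[|]]; try lia; destruct l as [|[|[|]]]; auto; lia. Qed.

Lemma A5_hi k l : A5 (S (S k)) l = if Nat.eqb l (S (S (S k))) then 1 else 0.
Proof. reflexivity. Qed.

Definition sq_pnorm3 (p a1 b1 a2 b2 a3 b3 t : R) : R :=
  Rpower (Rpower (a1 + b1 * t) p + Rpower (a2 + b2 * t) p + Rpower (a3 + b3 * t) p) (2 / p).

Definition pratio (p a1 a2 a3 a : R) : R := (Rpower a1 p + Rpower a2 p + Rpower a3 p) / Rpower a p.

Definition sq_pnorm3_slope (p a1 b1 a2 b2 a3 b3 : R) : R :=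
  2 * (b1 * (a1 * Rpower (pratio p a1 a2 a3 a1) ((2 - p) / p))
     + b2 * (a2 * Rpower (pratio p a1 a2 a3 a2) ((2 - p) / p))
     + b3 * (a3 * Rpower (pratio p a1 a2 a3 a3) ((2 - p) / p))).

Lemma Rpower_div u a p : 0 < u -> 0 < a -> Rpower u p / Rpower a p = Rpower (u / a) p.
Proof.
  intros Hu Ha. unfold Rdiv. rewrite <- Rpower_mult_distr by (auto; apply Rinv_0_lt_compat; auto).
  f_equal. unfold Rpower. rewrite ln_Rinv, <- exp_Ropp by auto. f_equal. ring.
Qed.

Lemma pratio_eq p a1 a2 a3 a : 0 < a -> 0 < a1 -> 0 < a2 -> 0 < a3 ->
  pratio p a1 a2 a3 a = Rpower (a1 / a) p + Rpower (a2 / a) p + Rpower (a3 / a) p.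
Proof.
  intros. unfold pratio. rewrite <- !Rpower_div by auto. field.
  apply Rgt_not_eq, Rpower_gt0.
Qed.

Lemma Rpower_sum3_lt p x1 x2 x3 y1 y2 y3 : 0 < p -> 0 < x1 -> 0 < x2 -> 0 < x3 ->
  x1 <= y1 -> x2 <= y2 -> x3 < y3 ->
  Rpower x1 p + Rpower x2 p + Rpower x3 p < Rpower y1 p + Rpower y2 p + Rpower y3 p.
Proof.
  intros. pose proof (Rle_Rpower_l x1 y1 p ltac:(lra) ltac:(lra)).
  pose proof (Rle_Rpower_l x2 y2 p ltac:(lra) ltac:(lra)).
  pose proof (Rlt_Rpower_l x3 y3 p ltac:(lra) ltac:(lra)). lra.
Qed.

Lemma Rpower_exponent_sign x y e : 0 < x -> x < y -> e <> 0 ->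
  0 < e * (Rpower y e - Rpower x e).
Proof.
  intros Hx Hxy He. unfold Rpower.
  assert (Hln : ln x < ln y) by (apply ln_increasing; lra).
  destruct (Rlt_le_dec 0 e).
  - assert (exp (e * ln x) < exp (e * ln y)) by (apply exp_increasing; nra). nra.
  - assert (exp (e * ln y) < exp (e * ln x)) by (apply exp_increasing; nra). nra.
Qed.

Lemma Rpower_chain_factor S a p : 0 < S -> 0 < a -> 0 < p ->
  Rpower S (2 / p - 1) * Rpower a (p - 1) = a * Rpower (S / Rpower a p) ((2 - p) / p).
Proof.
  intros HS Ha Hp. unfold Rpower. unfold Rdiv at 3.
  rewrite ln_mult, ln_Rinv, ln_exp by (auto using exp_pos, Rinv_0_lt_compat).
  rewrite <- exp_plus. rewrite <- (exp_ln a) at 2 by auto. rewrite <- exp_plus. f_equal. field. lra.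
Qed.

Lemma derivable_pt_lim_sq_pnorm3 p a1 b1 a2 b2 a3 b3 : 0 < p -> 0 < a1 -> 0 < a2 -> 0 < a3 ->
  derivable_pt_lim (sq_pnorm3 p a1 b1 a2 b2 a3 b3) 0 (sq_pnorm3_slope p a1 b1 a2 b2 a3 b3).
Proof.
  intros Hp H1 H2 H3.
  set (S := fun t => Rpower (a1 + b1 * t) p + Rpower (a2 + b2 * t) p + Rpower (a3 + b3 * t) p).
  assert (HS : derivable_pt_lim S 0
    (p * Rpower a1 (p - 1) * b1 + p * Rpower a2 (p - 1) * b2 + p * Rpower a3 (p - 1) * b3)).
  { repeat apply derivable_pt_lim_plus; apply derivable_pt_lim_Rpower_affine; auto. }
  assert (HS0 : S 0 = Rpower a1 p + Rpower a2 p + Rpower a3 p)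
    by (unfold S; rewrite !Rmult_0_r, !Rplus_0_r; auto).
  assert (Hpos : 0 < S 0).
  { rewrite HS0. pose proof (Rpower_gt0 a1 p). pose proof (Rpower_gt0 a2 p).
    pose proof (Rpower_gt0 a3 p). lra. }
  pose proof (derivable_pt_lim_comp S (fun x => Rpower x (2 / p)) 0 _ _ HS
                (derivable_pt_lim_power (S 0) (2 / p) Hpos)) as H.
  unfold comp in H. rewrite HS0 in H.
  replace (sq_pnorm3_slope p a1 b1 a2 b2 a3 b3) with
    (2 / p * Rpower (Rpower a1 p + Rpower a2 p + Rpower a3 p) (2 / p - 1) *
     (p * Rpower a1 (p - 1) * b1 + p * Rpower a2 (p - 1) * b2 + p * Rpower a3 (p - 1) * b3)).
  - exact H.
  - unfold sq_pnorm3_slope, pratio. rewrite <- !Rpower_chain_factor by (auto; lra). field. lra.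
Qed.

Definition g5 (p t : R) : R :=
  sq_pnorm3 p 13 (-3) 2 0 3 (-1) t + sq_pnorm3 p 2 6 10 0 6 (-2) t + sq_pnorm3 p 3 9 6 0 5 3 t.

Definition g5_slope (p : R) : R :=
  sq_pnorm3_slope p 13 (-3) 2 0 3 (-1) + sq_pnorm3_slope p 2 6 10 0 6 (-2)
  + sq_pnorm3_slope p 3 9 6 0 5 3.

Lemma g5_pos p t : 0 < g5 p t.
Proof. unfold g5, sq_pnorm3. repeat apply Rplus_lt_0_compat; apply Rpower_gt0. Qed.

Lemma derivable_pt_lim_g5 p : 0 < p -> derivable_pt_lim (g5 p) 0 (g5_slope p).
Proof.
  intros Hp. unfold g5, g5_slope.
  repeat apply derivable_pt_lim_plus; apply derivable_pt_lim_sq_pnorm3; lra.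
Qed.

Lemma g5_slope_neq0 p : 0 < p -> p <> 2 -> g5_slope p <> 0.
Proof.
  intros Hp Hp2 Hz. set (e := (2 - p) / p).
  assert (He : e <> 0) by (unfold e; intro E; apply Hp2; apply Rmult_eq_reg_r with (/ p);
                             [| apply Rinv_neq_0_compat; lra]; unfold Rdiv in E; lra).
  set (r013 := pratio p 13 2 3 13). set (r03 := pratio p 13 2 3 3).
  set (r12 := pratio p 2 10 6 2). set (r16 := pratio p 2 10 6 6).
  set (r23 := pratio p 3 6 5 3). set (r25 := pratio p 3 6 5 5).
  (* [e g5_slope / 2 = 3 e (r12^e - r03^e) + 12 e (r23^e - r16^e) + 9 e (r12^e - r013^e)
     + 15 e (r23^e - r013^e) + 15 e (r25^e - r013^e)], and every bracket has the sign of [e]. *)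
  assert (C1 : r03 < r12).
  { unfold r03, r12. rewrite !pratio_eq by lra.
    pose proof (Rpower_sum3_lt p (3/3) (2/3) (13/3) (2/2) (6/2) (10/2)). lra. }
  assert (C2 : r16 < r23).
  { unfold r16, r23. rewrite !pratio_eq by lra.
    pose proof (Rpower_sum3_lt p (6/6) (10/6) (2/6) (3/3) (5/3) (6/3)). lra. }
  assert (C3 : r013 < r12).
  { unfold r013, r12. rewrite !pratio_eq by lra.
    pose proof (Rpower_sum3_lt p (13/13) (2/13) (3/13) (2/2) (10/2) (6/2)). lra. }
  assert (C4 : r013 < r23).
  { unfold r013, r23. rewrite !pratio_eq by lra.
    pose proof (Rpower_sum3_lt p (13/13) (2/13) (3/13) (3/3) (6/3) (5/3)). lra. }
  assert (C5 : r013 < r25).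
  { unfold r013, r25. rewrite !pratio_eq by lra.
    pose proof (Rpower_sum3_lt p (13/13) (2/13) (3/13) (5/5) (3/5) (6/5)). lra. }
  assert (P013 : 0 < r013).
  { unfold r013. rewrite pratio_eq by lra. pose proof (Rpower_gt0 (13/13) p).
    pose proof (Rpower_gt0 (2/13) p). pose proof (Rpower_gt0 (3/13) p). lra. }
  assert (P03 : 0 < r03) by (unfold r03, pratio; apply Rdiv_lt_0_compat; [|apply Rpower_gt0];
    pose proof (Rpower_gt0 13 p); pose proof (Rpower_gt0 2 p); pose proof (Rpower_gt0 3 p); lra).
  assert (P16 : 0 < r16) by (unfold r16, pratio; apply Rdiv_lt_0_compat; [|apply Rpower_gt0];
    pose proof (Rpower_gt0 2 p); pose proof (Rpower_gt0 10 p); pose proof (Rpower_gt0 6 p); lra).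
  pose proof (Rpower_exponent_sign r03 r12 e P03 C1 He).
  pose proof (Rpower_exponent_sign r16 r23 e P16 C2 He).
  pose proof (Rpower_exponent_sign r013 r12 e P013 C3 He).
  pose proof (Rpower_exponent_sign r013 r23 e P013 C4 He).
  pose proof (Rpower_exponent_sign r013 r25 e P013 C5 He).
  unfold g5_slope, sq_pnorm3_slope in Hz. fold e r013 r03 r12 r16 r23 r25 in Hz.
  nra.
Qed.

Lemma sq_vnorm_row3 n p (v : nat -> R) a1 b1 a2 b2 a3 b3 t : (3 <= n)%nat -> 0 < p ->
  (forall j, (3 <= j)%nat -> (j < n)%nat -> v j = 0) ->
  Rabs (v 0%nat) = (a1 + b1 * t) / 14 -> Rabs (v 1%nat) = (a2 + b2 * t) / 14 ->
  Rabs (v 2%nat) = (a3 + b3 * t) / 14 ->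
  0 < a1 + b1 * t -> 0 < a2 + b2 * t -> 0 < a3 + b3 * t ->
  rpow (vnorm n v (Fin p)) 2 = sq_pnorm3 p a1 b1 a2 b2 a3 b3 t / Rpower (Rpower 14 p) (2 / p).
Proof.
  intros Hn Hp Hz E0 E1 E2 P1 P2 P3. simpl.
  rewrite (sumR_trunc n 3) by (auto; intros; rewrite Hz, Rabs_R0 by auto; apply rpow_zero; lra).
  simpl. rewrite E0, E1, E2.
  rewrite (rpow_pos ((a1 + b1 * t) / 14)), (rpow_pos ((a2 + b2 * t) / 14)),
    (rpow_pos ((a3 + b3 * t) / 14)), <- !Rpower_div by (try apply Rdiv_lt_0_compat; lra).
  set (S := Rpower (a1 + b1 * t) p + Rpower (a2 + b2 * t) p + Rpower (a3 + b3 * t) p).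
  assert (HS : 0 < S).
  { pose proof (Rpower_gt0 (a1 + b1 * t) p). pose proof (Rpower_gt0 (a2 + b2 * t) p).
    pose proof (Rpower_gt0 (a3 + b3 * t) p). unfold S. lra. }
  pose proof (Rpower_gt0 14 p) as HC.
  replace (0 + Rpower (a1 + b1 * t) p / Rpower 14 p + Rpower (a2 + b2 * t) p / Rpower 14 p
           + Rpower (a3 + b3 * t) p / Rpower 14 p) with (S / Rpower 14 p) by (unfold S; field; lra).
  rewrite rpow_rpow, rpow_pos by (apply Rlt_le || idtac; apply Rdiv_lt_0_compat; lra).
  replace (/ p * 2) with (2 / p) by (field; lra).
  rewrite <- Rpower_div by auto. reflexivity.
Qed.

Lemma Rabs_eq_pos x y : 0 <= x -> x = y -> Rabs x = y.
Proof. intros Hx <-. apply Rabs_pos_eq; auto. Qed.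

Lemma Rabs_eq_neg x y : x <= 0 -> - x = y -> Rabs x = y.
Proof. intros Hx <-. apply Rabs_left1; auto. Qed.

Section A5.
Variables m n : nat.
Hypothesis Hm : (3 <= m)%nat.
Hypothesis Hmn : (m < n)%nat.

Lemma A5_hi_sum k (f : nat -> R) : (S (S k) < m)%nat ->
  sumR n (fun l => A5 (S (S k)) l * f l) = f (S (S (S k))).
Proof.
  intros Hk. rewrite (sumR_single n (S (S (S k)))) by (try lia; intros l _ H;
    rewrite A5_hi; apply Nat.eqb_neq in H; rewrite H; ring).
  rewrite A5_hi, Nat.eqb_refl. ring.
Qed.

Lemma A5_lo_sum i (f : nat -> R) : (i < 2)%nat ->
  sumR n (fun l => A5 i l * f l) = A5 i 0%nat * f 0%nat + A5 i 1%nat * f 1%nat + A5 i 2%nat * f 2%nat.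
Proof.
  intros Hi. rewrite (sumR_trunc n 3) by (try lia; intros; rewrite A5_lo by lia; ring).
  simpl. ring.
Qed.

Lemma A5_full : full_rank m n A5.
Proof.
  intros c Hc.
  assert (H0 : c 0%nat = 0).
  { specialize (Hc 1%nat ltac:(lia)). rewrite (sumR_single m 0%nat) in Hc; [simpl in Hc; lra | lia |].
    intros [|[|k]] _ H; [lia | simpl; ring | rewrite A5_hi; simpl; ring]. }
  assert (H1 : c 1%nat = 0).
  { specialize (Hc 2%nat ltac:(lia)). rewrite (sumR_single m 1%nat) in Hc; [simpl in Hc; lra | lia |].
    intros [|[|k]] _ H; [simpl; ring | lia | rewrite A5_hi; simpl; ring]. }
  intros [|[|k]] Hk; auto.
  specialize (Hc (S (S (S k))) ltac:(lia)). rewrite (sumR_single m (S (S k))) in Hc; [| lia |].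
  - rewrite A5_hi, Nat.eqb_refl in Hc. lra.
  - intros [|[|l]] _ H; [rewrite A5_lo by lia; ring | rewrite A5_lo by lia; ring |].
    rewrite A5_hi. destruct (Nat.eqb_spec (S (S (S k))) (S (S (S l)))); [lia | ring].
Qed.

Lemma A5_gram i j : (i < m)%nat -> (j < m)%nat -> mmul n A5 (tr A5) i j = gram5 i j.
Proof.
  intros Hi Hj. unfold mmul, tr. destruct i as [|[|k]].
  1,2: rewrite A5_lo_sum by lia; destruct j as [|[|[|j]]]; simpl; ring.
  rewrite A5_hi_sum by lia. destruct j as [|[|j]]; [rewrite A5_lo by lia; simpl; ring.. |].
  rewrite A5_hi. simpl.
  destruct (Nat.eqb_spec (S (S (S k))) (S (S (S j)))); destruct (Nat.eqb_spec k j); try lia; ring.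
Qed.

Lemma A5_gram_inv :
  is_rinv m (mmul n A5 (tr A5)) gram5_inv /\ is_rinv m gram5_inv (mmul n A5 (tr A5)).
Proof.
  split; intros i j Hi Hj.
  - rewrite (mmul_ext_l m _ gram5) by (intros; apply A5_gram; auto).
    rewrite mmul_blk2 by (auto using gram5_blk2, gram5_inv_blk2; lia).
    unfold idm. destruct i as [|[|i]]; destruct j as [|[|j]]; simpl; try field; auto.
  - rewrite (mmul_ext_r m _ _ gram5) by (intros; apply A5_gram; auto).
    rewrite mmul_blk2 by (auto using gram5_blk2, gram5_inv_blk2; lia).
    unfold idm. destruct i as [|[|i]]; destruct j as [|[|j]]; simpl; try field; auto.
Qed.

Lemma A5_dagger l j : (l < n)%nat -> (j < m)%nat -> dagger m n A5 l j = X5 0 l j.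
Proof.
  intros Hl Hj. destruct A5_gram_inv as [H1 H2].
  rewrite (dagger_of_gram_inverse m n A5 gram5_inv H1 H2 l j Hj).
  destruct (Nat.ltb_spec j 2).
  - rewrite (sumR_trunc m 2); try lia.
    + simpl. destruct j as [|[|]]; try lia; destruct l as [|[|[|l]]]; simpl; field.
    + intros i Hi _. rewrite gram5_inv_blk2 by lia. destruct (Nat.eqb_spec i j); [lia | ring].
  - rewrite (sumR_single m j); auto.
    + rewrite gram5_inv_blk2, Nat.eqb_refl by lia. destruct j as [|[|j]]; try lia.
      rewrite A5_hi. simpl. destruct (Nat.eqb l (S (S (S j)))); ring.
    + intros i _ Hne. rewrite gram5_inv_blk2 by lia. destruct (Nat.eqb_spec i j); [congruence | ring].
Qed.

Lemma X5_in_G t : in_G m n A5 (X5 t).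
Proof.
  intros [|[|k]] j Hk Hj; unfold mmul.
  1,2: rewrite A5_lo_sum by lia; unfold idm; destruct j as [|[|j]]; simpl; field.
  rewrite A5_hi_sum by lia. unfold X5, idm. destruct j as [|[|j]]; simpl; ring.
Qed.

Lemma mmul_X5_A5_low t i j : (i < 3)%nat ->
  mmul m (X5 t) A5 i j = X5 t i 0%nat * A5 0%nat j + X5 t i 1%nat * A5 1%nat j.
Proof.
  intros Hi. unfold mmul. rewrite (sumR_trunc m 2); [simpl; ring | lia |].
  intros [|[|l]] Hl _; try lia. unfold X5. destruct (Nat.eqb_spec i (S (S (S l)))); [lia | ring].
Qed.

Lemma mmul_X5_A5_unit t i j : (3 <= i <= m)%nat ->
  mmul m (X5 t) A5 i j = if Nat.eqb j i then 1 else 0.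
Proof.
  intros Hi. destruct i as [|[|[|k]]]; try lia. unfold mmul.
  rewrite (sumR_single m (S (S k))); [| lia |].
  - unfold X5. rewrite Nat.eqb_refl, A5_hi. ring.
  - intros [|[|l]] _ H; unfold X5; try (simpl; ring).
    destruct (Nat.eqb_spec (S (S (S k))) (S (S (S l)))); [lia | ring].
Qed.

Lemma mmul_X5_A5_high t i j : (m < i)%nat -> mmul m (X5 t) A5 i j = 0.
Proof.
  intros Hi. unfold mmul. apply sumR_zero. intros [|[|l]] Hl; unfold X5.
  1,2: destruct i as [|[|[|]]]; try lia; ring.
  destruct (Nat.eqb_spec i (S (S (S l)))); [lia | ring].
Qed.

Definition tail5 : R := sumR (n - 3) (fun i => rpow (if Nat.leb (3 + i) m then 1 else 0) 2).

Lemma tail5_nonneg : 0 <= tail5.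
Proof. apply sumR_nonneg. intros. apply rpow_nonneg. Qed.

Lemma rowN_X5 p t : 0 < p -> -1/4 < t < 1/4 ->
  rowN n (Fin p) (Fin 2) (mmul m (X5 t) A5) =
  rpow (g5 p t / Rpower (Rpower 14 p) (2 / p) + tail5) (/ 2).
Proof.
  intros Hp Ht. rewrite rowN_fin, (sumR_split n 3) by lia. unfold tail5, g5. f_equal. f_equal.
  - cbn [sumR]. rewrite Rplus_0_l.
    assert (Hrow : forall i, (i < 3)%nat -> vnorm n (mmul m (X5 t) A5 i) (Fin p) =
      vnorm n (fun j => X5 t i 0%nat * A5 0%nat j + X5 t i 1%nat * A5 1%nat j) (Fin p)).
    { intros i Hi. apply vnorm_ext. intros; apply mmul_X5_A5_low; auto. }
    assert (Hhi : forall i j, (3 <= j)%nat ->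
              X5 t i 0%nat * A5 0%nat j + X5 t i 1%nat * A5 1%nat j = 0).
    { intros i j Hj. rewrite !A5_lo by lia. ring. }
    rewrite !Hrow by lia.
    rewrite (sq_vnorm_row3 n p _ 13 (-3) 2 0 3 (-1) t), (sq_vnorm_row3 n p _ 2 6 10 0 6 (-2) t),
      (sq_vnorm_row3 n p _ 3 9 6 0 5 3 t); try lia; try lra; try (intros; apply Hhi; lia).
    all: simpl; first [apply Rabs_eq_pos; [lra | field] | apply Rabs_eq_neg; [lra | field]].
  - apply sumR_ext. intros i Hi. f_equal. destruct (Nat.leb_spec (3 + i) m).
    + rewrite (vnorm_ext n _ (fun j => if Nat.eqb j (3 + i) then 1 else 0))
        by (intros; apply mmul_X5_A5_unit; lia).
      apply vnorm_unit; simpl; lia || lra.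
    + apply vnorm_zero. intros. apply mmul_X5_A5_high. lia.
Qed.

Lemma A5_dagger_not_pginv p : 0 < p -> p <> 2 ->
  ~ in_pginv m n A5 (rowN n (Fin p) (Fin 2)) (dagger m n A5).
Proof.
  intros Hp Hp2 Hopt. apply (g5_slope_neq0 p Hp Hp2).
  apply (pginv_critical m n A5 (rowN n (Fin p) (Fin 2)) X5 (g5 p) 0 _ (1/4));
    auto using X5_in_G, derivable_pt_lim_g5; [lra | |].
  - intros t Ht1 Ht2 Hle. rewrite !rowN_X5 in Hle by lra.
    pose proof (Rpower_gt0 (Rpower 14 p) (2 / p)). pose proof tail5_nonneg.
    apply rpow_le_inv in Hle; [| lra | pose proof (g5_pos p t); apply Rplus_le_le_0_compat; auto;
                                    apply Rlt_le, Rdiv_lt_0_compat; auto].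
    apply (Rmult_le_reg_r (/ Rpower (Rpower 14 p) (2 / p))); [apply Rinv_0_lt_compat; auto|].
    unfold Rdiv in Hle. lra.
  - eapply in_pginv_rowN_ext; [| exact Hopt]. intros; apply A5_dagger; auto.
Qed.

Lemma A5_dagger_pginv_iff p : 0 < p ->
  in_pginv m n A5 (rowN n (Fin p) (Fin 2)) (dagger m n A5) <-> p = 2.
Proof.
  intros Hp. split.
  - intros H. destruct (Req_dec p 2) as [|Hp2]; auto.
    exfalso. exact (A5_dagger_not_pginv p Hp Hp2 H).
  - intros ->. apply dagger_pginv_22, A5_full.
Qed.

End A5.

Theorem theorem4 (m n : nat) (Hm : (1 <= m)%nat) (Hmn : (m < n)%nat) :
  (* (a) *)
  (m = 1%nat ->
     (forall (A : mat) (p q : ext), ext_pos p -> ext_pos q ->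
        forall X : mat, in_pginv m n A (rowN n p q) X <-> in_ginv m n A (entN n m q) X)
     /\
     (exists A1 : mat, full_rank m n A1 /\
        forall (p : ext) (q : R), ext_pos p -> 0 < q ->
          (in_pginv m n A1 (rowN n p (Fin q)) (dagger m n A1) <-> q = 2)))
  /\
  (* (b) *)
  ((2 <= m)%nat ->
     exists A4 : mat, full_rank m n A4 /\
       forall p q : R, 1 <= p -> 0 < q ->
         (in_pginv m n A4 (rowN n (Fin p) (Fin q)) (dagger m n A4) <-> q = 2))
  /\
  (* (c) *)
  ((3 <= m)%nat ->
     exists A5 : mat, full_rank m n A5 /\
       forall p : R, 1 <= p ->
         (in_pginv m n A5 (rowN n (Fin p) (Fin 2)) (dagger m n A5) <-> p = 2))
  /\
  (* (d) *)
  ((3 <= m)%nat ->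
     forall p q : R, 1 <= p -> 0 < q ->
       ((forall A : mat, full_rank m n A ->
           in_pginv m n A (rowN n (Fin p) (Fin q)) (dagger m n A))
        <-> (p = 2 /\ q = 2))).
Proof.
  split; [| split; [| split]].
  - intros ->. split.
    + intros A p q Hp Hq X. apply pginv_rank_one; auto.
    + exists A4. split; [apply A4_full; lia|].
      intros p q Hp Hq. apply A4_dagger_pginv_iff; auto.
  - intros Hm2. exists A4. split; [apply A4_full; auto|].
    intros p q Hp Hq. apply A4_dagger_pginv_iff; simpl; auto; lra.
  - intros Hm3. exists A5. split; [apply A5_full; auto|].
    intros p Hp. apply A5_dagger_pginv_iff; auto; lra.
  - intros Hm3 p q Hp Hq. split.
    + intros Hall.
      assert (Hq2 : q = 2).
      { apply (A4_dagger_pginv_iff m n) with (Fin p); simpl; auto; try lra.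
        apply Hall, A4_full; auto. }
      subst q. split; auto.
      apply (A5_dagger_pginv_iff m n); auto; try lra. apply Hall, A5_full; auto.
    + intros [-> ->] A HA. apply dagger_pginv_22; auto.
Qed.
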